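(* For $\theta\in \mathrm{SL}_2(\mathbb Z)$ let $\widehat\theta\in\mathrm{Aut}_{\mathbb F}(\mathfrak{sl}_2)$ be $\widehat\theta(u)=\theta u\theta^{-1}$. The homomorphism $\theta\mapsto\widehat\theta$ from $\mathrm{SL}_2(\mathbb Z)$ to $\mathrm{Aut}_{\mathbb F}(\mathfrak{sl}_2)$ has kernel $\{\pm I\}$ and so induces an injective homomorphism $\imath:\mathrm{PSL}_2(\mathbb Z)\to \mathrm{Aut}_{\mathbb F}(\mathfrak{sl}_2)$. The image of $\imath$ is exactly the group $G$. In particular $G\cong \mathrm{PSL}_2(\mathbb Z)$.
   Context: $\mathbb F$ is a field of characteristic zero and $\mathfrak{sl}_2$ is the Lie algebra of $2\times 2$ trace-zero matrices over $\mathbb F$, with $\mathrm{ad}\,u(v)=[u,v]$. Let $x^*=\begin{pmatrix}1&-1\\1&-1\end{pmatrix}$, $y^*=\begin{pmatrix}0&0\\1&0\end{pmatrix}$, $z^*=\begin{pmatrix}0&-1\\0&0\end{pmatrix}$. These are nilpotent, so $\exp(\mathrm{ad}\,u)=\sum_{n\ge0}(\mathrm{ad}\,u)^n/n!$ is a well-defined automorphism of $\mathfrak{sl}_2$ for $u\in\{x^*,y^*,z^*\}$. $G$ is the subgroup of $\mathrm{Aut}_{\mathbb F}(\mathfrak{sl}_2)$ generated by $\exp(\mathrm{ad}\,x^* )$, $\exp(\mathrm{ad}\,y^* )$ and $\exp(\mathrm{ad}\,z^* )$. *)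

From HB Require Import structures.
From mathcomp Require Import all_boot all_order all_algebra.
Set Implicit Arguments. Unset Strict Implicit. Unset Printing Implicit Defensive.
Import Order.TTheory GRing.Theory Num.Theory.
Local Open Scope ring_scope.

Section Defs.
Variable F : fieldType.

Definition sl2 : pred 'M[F]_2 := [pred A | \tr A == 0].

Definition ad (u : 'M[F]_2) (v : 'M[F]_2) : 'M[F]_2 := u *m v - v *m u.

(* exp(ad u) = sum_n (ad u)^n / n!.  For nilpotent u, ad u is a nilpotent
   operator on the 4-dimensional space 'M_2, so (ad u)^n = 0 for n >= 4 and
   the series is exactly this finite sum. *)
Definition expad (u : 'M[F]_2) (v : 'M[F]_2) : 'M[F]_2 :=
  \sum_(n < 4) (n`!%:R)^-1 *: iter n (ad u) v.

Definition xstar : 'M[F]_2 := \matrix_(i < 2, j < 2) (if j == 0 :> nat then 1 else -1).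
Definition ystar : 'M[F]_2 := \matrix_(i < 2, j < 2)
  (if (i == 1 :> nat) && (j == 0 :> nat) then 1 else 0).
Definition zstar : 'M[F]_2 := \matrix_(i < 2, j < 2)
  (if (i == 0 :> nat) && (j == 1 :> nat) then -1 else 0).

(* Maps are modelled as functions 'M_2 -> 'M_2, considered only on sl2. *)
Definition agree_sl2 (f g : 'M[F]_2 -> 'M[F]_2) := {in sl2, f =1 g}.

Definition isLieAut (f : 'M[F]_2 -> 'M[F]_2) : Prop :=
  [/\ {in sl2, forall u, f u \in sl2},
      {in sl2 &, forall u v, forall a : F, f (a *: u + v) = a *: f u + f v},
      {in sl2 &, forall u v, f (ad u v) = ad (f u) (f v)} &
      exists g : 'M[F]_2 -> 'M[F]_2,
        [/\ {in sl2, forall u, g u \in sl2}, {in sl2, cancel f g} &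
            {in sl2, cancel g f}]].

Definition subgroup_closed (H : ('M[F]_2 -> 'M[F]_2) -> Prop) : Prop :=
  [/\ H id,
      (forall f g, H f -> H g -> H (f \o g)),
      (forall f g, H f -> {in sl2, cancel f g} -> {in sl2, cancel g f} -> H g) &
      (forall f g, H f -> agree_sl2 f g -> H g)].

Definition Ggen (f : 'M[F]_2 -> 'M[F]_2) : Prop :=
  forall H, subgroup_closed H ->
    H (expad xstar) -> H (expad ystar) -> H (expad zstar) -> H f.

Definition SL2Z (t : 'M[int]_2) : Prop := \det t = 1.

Definition hat (t : 'M[int]_2) (u : 'M[F]_2) : 'M[F]_2 :=
  let tF := map_mx (fun z : int => z%:~R) t in tF *m u *m invmx tF.

End Defs.

From HB Require Import structures.
From mathcomp Require Import all_boot all_order all_algebra ring zify.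
Import Order.TTheory GRing.Theory Num.Theory.
Set Implicit Arguments. Unset Strict Implicit. Unset Printing Implicit Defensive.
Local Open Scope ring_scope.

(* Write [hat t u = T u T^-1] with [T] the image of [t] in 'M[F]_2; 2x2
   matrices are handled through their entries ([mk2]).
   1. Conjugation by an invertible matrix [M] (for matrices of any size over a
      commutative unit ring) is linear, multiplicative in [M], insensitive to
      the sign of [M], preserves the trace and the commutator bracket; hence
      every [hat t] is a Lie automorphism of sl2 and [hat] is a homomorphism.
   2. Kernel: a 2x2 matrix commuting with the two matrix units E12, E21 of sl2
      is scalar; in characteristic 0 the integer matrix [t] is then scalar,
      and [det t = 1] forces [t = +-1].
   3. Generators: if [u^2 = 0] and [2] is invertible, [exp(ad u)] is
      conjugation by [1 + u]; for u = x*, y*, z* the matrix [1 + u] is the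
      image of an explicit X, Y, Z in SL_2(Z), so [exp(ad u) = hat X, hat Y,
      hat Z].
   4. SL_2(Z) is generated by Y and Z (a Euclidean algorithm on the first
      column).  Hence the image of [hat] is a subgroup containing the three
      generators of G, and every subgroup containing them contains the image:
      G is exactly the image of [hat]. *)

Definition mk2 {R : Type} (a b c d : R) : 'M[R]_2 :=
  \matrix_(i < 2, j < 2) if i == 0 :> nat then (if j == 0 :> nat then a else b)
                         else (if j == 0 :> nat then c else d).

Lemma ord2P (i : 'I_2) : i = 0 \/ i = 1.
Proof. by case: i => [[|[|//]] Hi]; [left|right]; apply: val_inj. Qed.

Lemma matrix2_ext {R : Type} (A B : 'M[R]_2) :
  A 0 0 = B 0 0 -> A 0 1 = B 0 1 -> A 1 0 = B 1 0 -> A 1 1 = B 1 1 -> A = B.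
Proof.
by move=> *; apply/matrixP => i j; case: (ord2P i) => ->; case: (ord2P j) => ->.
Qed.

Lemma mk2_eta {R : Type} (A : 'M[R]_2) : A = mk2 (A 0 0) (A 0 1) (A 1 0) (A 1 1).
Proof. by apply: matrix2_ext; rewrite !mxE. Qed.

Lemma mk2_inj {R : Type} (a b c d a' b' c' d' : R) :
  mk2 a b c d = mk2 a' b' c' d' -> [/\ a = a', b = b', c = c' & d = d'].
Proof. by move/matrixP=> E; move: (E 0 0) (E 0 1) (E 1 0) (E 1 1); rewrite !mxE. Qed.

Lemma mk2_mul {R : pzSemiRingType} (a b c d a' b' c' d' : R) :
  mk2 a b c d *m mk2 a' b' c' d' =
  mk2 (a * a' + b * c') (a * b' + b * d') (c * a' + d * c') (c * b' + d * d').
Proof. by apply: matrix2_ext; rewrite !mxE !big_ord_recl big_ord0 !mxE /= addr0. Qed.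

Lemma mk2_det {R : comPzRingType} (a b c d : R) : \det (mk2 a b c d) = a * d - b * c.
Proof.
rewrite (expand_det_row _ 0) !big_ord_recl big_ord0 addr0 /cofactor !det_mx11 !mxE /=.
by rewrite !expr0 expr1 !mul1r mulN1r mulrN.
Qed.

Lemma mk2_trace {R : pzSemiRingType} (a b c d : R) : \tr (mk2 a b c d) = a + d.
Proof. by rewrite /mxtrace !big_ord_recl big_ord0 !mxE /= addr0. Qed.

Lemma mk2_zero {R : nmodType} : 0 = mk2 0 0 0 0 :> 'M[R]_2.
Proof. by apply: matrix2_ext; rewrite !mxE. Qed.

Lemma mk2_scalar {R : pzSemiRingType} (a : R) : a%:M = mk2 a 0 0 a.
Proof. by apply: matrix2_ext; rewrite !mxE. Qed.

Section Conjugation.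
Variables (R : comUnitRingType) (n : nat).
Implicit Types (M N u v : 'M[R]_n).

Definition conjm M u := M *m u *m invmx M.

Lemma invmx_eq M N : M *m N = 1%:M -> invmx M = N.
Proof.
move=> MN; have [uM _] := mulmx1_unit MN.
by rewrite -[invmx M]mulmx1 -MN mulmxA mulVmx // mul1mx.
Qed.

Lemma conjmM M N u : M \in unitmx -> N \in unitmx ->
  conjm (M *m N) u = conjm M (conjm N u).
Proof.
move=> uM uN; rewrite /conjm.
have -> : invmx (M *m N) = invmx N *m invmx M.
  by apply: invmx_eq; rewrite -mulmxA (mulmxA N) mulmxV // mul1mx mulmxV.
by rewrite !mulmxA.
Qed.

Lemma conjm1 u : conjm 1%:M u = u.
Proof. by rewrite /conjm invmx1 mul1mx mulmx1. Qed.

Lemma conjmN M u : M \in unitmx -> conjm (- M) u = conjm M u.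
Proof.
move=> uM; rewrite /conjm.
have -> : invmx (- M) = - invmx M by apply: invmx_eq; rewrite mulNmx mulmxN opprK mulmxV.
by rewrite mulNmx mulmxN mulNmx opprK.
Qed.

Lemma conjm_trace M u : M \in unitmx -> \tr (conjm M u) = \tr u.
Proof. by move=> uM; rewrite /conjm mxtrace_mulC mulmxA mulVmx // mul1mx. Qed.

Lemma conjm_linear M (a : R) u v : conjm M (a *: u + v) = a *: conjm M u + conjm M v.
Proof. by rewrite /conjm mulmxDr mulmxDl -scalemxAr -scalemxAl. Qed.

Lemma conjm_bracket M u v : M \in unitmx ->
  conjm M (u *m v - v *m u) = conjm M u *m conjm M v - conjm M v *m conjm M u.
Proof. by move=> uM; rewrite /conjm mulmxBr mulmxBl !mulmxA !mulmxKV. Qed.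

Lemma conjm_fixed M u : M \in unitmx -> conjm M u = u -> M *m u = u *m M.
Proof. by move=> uM E; rewrite -{2}E /conjm mulmxKV. Qed.

Lemma invmx_unipotent u : u *m u = 0 -> invmx (1%:M + u) = 1%:M - u.
Proof.
by move=> uu; apply: invmx_eq; rewrite mulmxDl mul1mx mulmxBr mulmx1 uu subr0 subrK.
Qed.

End Conjugation.

Lemma SL2Z_unit t : SL2Z t -> t \in unitmx.
Proof. by rewrite unitmxE => ->; rewrite unitr1. Qed.

Lemma SL2Z_mul t s : SL2Z t -> SL2Z s -> SL2Z (t *m s).
Proof. by rewrite /SL2Z det_mulmx => -> ->; rewrite mulr1. Qed.

Lemma SL2Z_inv t : SL2Z t ->
  [/\ SL2Z (invmx t), invmx t *m t = 1%:M & t *m invmx t = 1%:M].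
Proof.
move=> Ht; split; [|exact: mulVmx (SL2Z_unit Ht)|exact: mulmxV (SL2Z_unit Ht)].
by rewrite /SL2Z det_inv Ht invr1.
Qed.

Section Hat.
Variable F : fieldType.
Implicit Types (t s : 'M[int]_2) (u v : 'M[F]_2).

Definition intmx t : 'M[F]_2 := map_mx intr t.

Lemma hatE t u : hat t u = conjm (intmx t) u.
Proof. by []. Qed.

Lemma intmxM t s : intmx (t *m s) = intmx t *m intmx s.
Proof. exact: map_mxM. Qed.

Lemma intmx_unit t : SL2Z t -> intmx t \in unitmx.
Proof.
by move=> Ht; rewrite unitmxE /intmx (det_map_mx (intr : {rmorphism int -> F})) Ht
  rmorph1 unitr1.
Qed.

Lemma hat_mul t s u : SL2Z t -> SL2Z s -> hat (t *m s) u = hat t (hat s u).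
Proof. by move=> Ht Hs; rewrite !hatE intmxM conjmM ?intmx_unit. Qed.

Lemma hat1 u : hat 1%:M u = u.
Proof. by rewrite hatE /intmx map_mx1 conjm1. Qed.

Lemma hatN t u : SL2Z t -> hat (- t) u = hat t u.
Proof. by move=> Ht; rewrite !hatE /intmx map_mxN conjmN ?intmx_unit. Qed.

Lemma hatK t : SL2Z t -> cancel (hat (F:=F) t) (hat (invmx t)).
Proof.
by move=> Ht u; have [Hi tVt _] := SL2Z_inv Ht; rewrite -hat_mul // tVt hat1.
Qed.

Lemma hatKV t : SL2Z t -> cancel (hat (F:=F) (invmx t)) (hat t).
Proof.
by move=> Ht u; have [Hi _ ttV] := SL2Z_inv Ht; rewrite -hat_mul // ttV hat1.
Qed.

Lemma hat_sl2 t u : SL2Z t -> u \in sl2 (F:=F) -> hat t u \in sl2 (F:=F).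
Proof. by move=> Ht; rewrite !inE hatE conjm_trace ?intmx_unit. Qed.

Lemma hat_LieAut t : SL2Z t -> isLieAut (hat (F:=F) t).
Proof.
move=> Ht; split.
- by move=> u; apply: hat_sl2.
- by move=> u v _ _ a; rewrite !hatE conjm_linear.
- by move=> u v _ _; rewrite /ad !hatE conjm_bracket ?intmx_unit.
exists (hat (invmx t)); split.
- by move=> u; apply: hat_sl2; have [] := SL2Z_inv Ht.
- by move=> u _; apply: hatK.
- by move=> u _; apply: hatKV.
Qed.

End Hat.

Lemma commute_units_scalar (R : comPzRingType) (A : 'M[R]_2) :
  A *m mk2 0 1 0 0 = mk2 0 1 0 0 *m A -> A *m mk2 0 0 1 0 = mk2 0 0 1 0 *m A ->
  A = (A 0 0)%:M.
Proof.
rewrite [A]mk2_eta !mk2_mul !mxE /= !(mul0r, mulr0, mul1r, mulr1, add0r, addr0).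
by move=> /(@mk2_inj R)[<- -> _ _] /(@mk2_inj R)[-> _ _ _]; exact/esym/mk2_scalar.
Qed.

Section CharZero.
Variables (F : fieldType) (charF0 : [pchar F] =i pred0).

Lemma intr_inj_char0 : injective (intr : int -> F).
Proof.
have natr_eq0 := (pcharf0P F).1 charF0.
have intr_eq0 (z : int) : (z%:~R : F) = 0 -> z = 0.
  case: z => n /=; first by move/eqP; rewrite natr_eq0 => /eqP ->.
  by rewrite NegzE mulrNz => /eqP; rewrite oppr_eq0 natr_eq0.
by move=> y z E; apply/eqP; rewrite -subr_eq0; apply/eqP/intr_eq0; rewrite rmorphB /= E subrr.
Qed.

Lemma intmx_inj : injective (@intmx F).
Proof.
move=> t s /matrixP E; apply/matrixP => i j.
by have := E i j; rewrite !mxE => /intr_inj_char0.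
Qed.

Lemma hat_kernel t : SL2Z t -> (agree_sl2 (hat (F:=F) t) id <-> (t = 1 \/ t = -1)).
Proof.
move=> Ht; split; last by case=> -> u _ /=; rewrite ?hatN ?hat1 // /SL2Z det1.
move=> trivial_hat.
have comm u : u \in sl2 (F:=F) -> intmx F t *m u = u *m intmx F t.
  by move=> Hu; apply: conjm_fixed; [exact: intmx_unit | exact: trivial_hat].
have E12_sl2 : mk2 0 1 0 0 \in sl2 (F:=F) by rewrite inE mk2_trace addr0.
have E21_sl2 : mk2 0 0 1 0 \in sl2 (F:=F) by rewrite inE mk2_trace addr0.
have t_scalar : t = (t 0 0)%:M.
  apply: intmx_inj; rewrite /intmx map_scalar_mx /=.
  rewrite [LHS](commute_units_scalar (comm _ E12_sl2) (comm _ E21_sl2)).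
  by rewrite mxE.
have : t 0 0 ^+ 2 == 1 by rewrite -(det_scalar 2 (t 0 0)) -t_scalar; apply/eqP.
rewrite sqrf_eq1 => /orP[] /eqP t00; rewrite t_scalar t00; [left | right] => //.
by rewrite rmorphN.
Qed.

End CharZero.

Section SquareZeroExponential.
Variables (F : fieldType) (two_neq0 : (2%:R : F) != 0).

Lemma expad_square_zero (u v : 'M[F]_2) : u *m u = 0 ->
  expad u v = conjm (1%:M + u) v.
Proof.
move=> uu; rewrite /conjm invmx_unipotent //.
have ad2 : ad u (ad u v) = - (u *m v *m u + u *m v *m u).
  rewrite /ad mulmxBr mulmxBl !mulmxA uu mul0mx -(mulmxA v) uu mulmx0.
  by rewrite sub0r subr0 opprD.
have ad3 : ad u (ad u (ad u v)) = 0.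
  rewrite ad2 /ad mulmxN mulNmx mulmxDr mulmxDl !mulmxA uu !mul0mx.
  by rewrite -!(mulmxA _ u u) uu !mulmx0 !addr0 oppr0 subr0.
rewrite /expad !big_ord_recl big_ord0 /= ad3 ad2 scaler0 addr0 /bump /=.
rewrite !factS fact0 /= invr1 !scale1r -mulr2n -scaler_nat scalerN scalerA.
rewrite mulVf // scale1r addr0 /ad mulmxDl mul1mx mulmxDr mulmxN !mulmx1 mulmxDl.
by rewrite ?mulmxA opprD !addrA.
Qed.

Lemma expad_hat (u : 'M[F]_2) t : u *m u = 0 -> intmx F t = 1%:M + u ->
  expad u =1 hat t.
Proof. by move=> uu Ht v; rewrite expad_square_zero // hatE Ht. Qed.

End SquareZeroExponential.

(* Integer matrices whose images are [1 + x*], [1 + y*], [1 + z*]. *)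
Definition Xi : 'M[int]_2 := mk2 2 (-1) 1 0.
Definition Yi : 'M[int]_2 := mk2 1 0 1 1.
Definition Zi : 'M[int]_2 := mk2 1 (-1) 0 1.

Lemma SL2Z_Xi : SL2Z Xi. Proof. by rewrite /SL2Z mk2_det. Qed.
Lemma SL2Z_Yi : SL2Z Yi. Proof. by rewrite /SL2Z mk2_det. Qed.
Lemma SL2Z_Zi : SL2Z Zi. Proof. by rewrite /SL2Z mk2_det. Qed.

Section Generators.
Variable F : fieldType.

Lemma intmx_Xi : intmx F Xi = 1%:M + xstar F.
Proof. by apply: matrix2_ext; rewrite !mxE /= ?intrN ?mulr2n ?add0r ?sub0r ?subrr. Qed.
Lemma intmx_Yi : intmx F Yi = 1%:M + ystar F.
Proof. by apply: matrix2_ext; rewrite !mxE /= ?add0r ?addr0. Qed.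
Lemma intmx_Zi : intmx F Zi = 1%:M + zstar F.
Proof. by apply: matrix2_ext; rewrite !mxE /= ?intrN ?add0r ?addr0. Qed.

Lemma generators_mk2 : [/\ xstar F = mk2 1 (-1) 1 (-1), ystar F = mk2 0 0 1 0
  & zstar F = mk2 0 (-1) 0 0].
Proof. by split; apply: matrix2_ext; rewrite !mxE. Qed.

Lemma generators_sq :
  [/\ xstar F *m xstar F = 0, ystar F *m ystar F = 0 & zstar F *m zstar F = 0].
Proof.
have [-> -> ->] := generators_mk2.
split; rewrite mk2_mul mk2_zero ?(mulr1, mul1r, mulrN1, mulN1r, mulr0, mul0r,
  opprK, addNr, subrr, oppr0, addr0, add0r); reflexivity.
Qed.

End Generators.

Definition Um (k : int) : 'M[int]_2 := mk2 1 k 0 1.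

Definition Sm : 'M[int]_2 := mk2 0 (-1) 1 0.

Lemma SL2Z_Um k : SL2Z (Um k).
Proof. by rewrite /SL2Z mk2_det mulr1 mulr0 subr0. Qed.

Lemma SL2Z_Sm : SL2Z Sm.
Proof. by rewrite /SL2Z mk2_det. Qed.

Lemma Um0 : Um 0 = 1%:M.
Proof. by apply: matrix2_ext; rewrite !mxE. Qed.

Lemma UmD a b : Um a *m Um b = Um (a + b).
Proof.
by rewrite mk2_mul !(mul1r, mulr1, mul0r, mulr0, add0r, addr0) addrC.
Qed.

Lemma Sm_ZYZ : Zi *m Yi *m Zi = Sm.
Proof. by rewrite !mk2_mul. Qed.

Lemma Sm_sq : Sm *m Sm = - 1%:M.
Proof. by rewrite mk2_mul mk2_scalar; apply: matrix2_ext; rewrite !mxE. Qed.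

Lemma mk2_euclid_step (a b c d q r : int) : a = q * c + r ->
  mk2 a b c d = Um q *m Sm *m mk2 c d (- r) (q * d - b).
Proof.
move=> ->; rewrite !mk2_mul; apply: matrix2_ext; rewrite !mxE /=; ring.
Qed.

(* SL_2(Z) is generated by [Yi] and [Zi]: any property of elements of
   SL_2(Z) that holds for [Yi], [Zi] and is stable under products and
   inverses holds everywhere. *)
Section Generation.
Variable P : 'M[int]_2 -> Prop.
Hypotheses (P_Yi : P Yi) (P_Zi : P Zi).
Hypothesis P_mul : forall t s, SL2Z t -> SL2Z s -> P t -> P s -> P (t *m s).
Hypothesis P_inv : forall t, SL2Z t -> P t -> P (invmx t).

(* The identity and all [Um k = Zi^(-k)] are generated. *)
Lemma P_one : P 1%:M.
Proof.
have [SZ' Z'Z _] := SL2Z_inv SL2Z_Zi.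
by rewrite -Z'Z; apply: P_mul => //; [exact: SL2Z_Zi | exact: P_inv SL2Z_Zi P_Zi].
Qed.

Lemma P_Um k : P (Um k).
Proof.
have P_Um1 : P (Um 1).
  have -> : Um 1 = invmx Zi by apply/esym/invmx_eq; rewrite UmD addNr Um0.
  exact: P_inv SL2Z_Zi P_Zi.
have P_Um_nat (e : int) (n : nat) : P (Um e) -> P (Um (e *+ n)).
  move=> Pe; elim: n => [|n IH]; first by rewrite mulr0n Um0; exact: P_one.
  by rewrite mulrS -UmD; apply: P_mul => //; apply: SL2Z_Um.
case: k => n; rewrite ?NegzE -natz; first exact: P_Um_nat 1 n P_Um1.
by rewrite -mulNrn; exact: P_Um_nat (-1) n.+1 P_Zi.
Qed.

Lemma P_Sm : P Sm.
Proof.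
have SZY := SL2Z_mul SL2Z_Zi SL2Z_Yi.
by rewrite -Sm_ZYZ; exact: P_mul SZY SL2Z_Zi (P_mul SL2Z_Zi SL2Z_Yi P_Zi P_Yi) P_Zi.
Qed.

(* [-1 = Sm^2] lies in the generated group. *)
Lemma P_opp t : SL2Z t -> P t -> P (- t).
Proof.
move=> St Pt; have SS := SL2Z_mul SL2Z_Sm SL2Z_Sm.
have -> : - t = Sm *m Sm *m t by rewrite Sm_sq mulNmx mul1mx.
exact: P_mul SS St (P_mul SL2Z_Sm SL2Z_Sm P_Sm P_Sm) Pt.
Qed.

(* Upper triangular elements of SL_2(Z) are [+- Um b]. *)
Lemma P_triangular a b d : a * d = 1 -> P (mk2 a b 0 d).
Proof.
move=> ad1; have /orP[/eqP d1 | /eqP dN1] := intUnitRing.unitzPl ad1.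
  move: ad1; rewrite d1 mulr1 => ->; exact: P_Um.
move: ad1; rewrite dN1 mulrN1 => /(congr1 -%R); rewrite opprK => ->.
have -> : mk2 (-1) b 0 (-1) = - Um (- b) by apply: matrix2_ext; rewrite !mxE ?opprK.
exact: P_opp (SL2Z_Um _) (P_Um _).
Qed.

(* Induction on the size of the lower-left entry, by Euclidean division. *)
Lemma P_mk2 n a b c d : (`|c| < n)%N -> a * d - b * c = 1 -> P (mk2 a b c d).
Proof.
elim: n => [//|n IH] in a b c d *; move=> c_lt det1.
have [c0 | c_neq0] := eqVneq c 0.
  by rewrite c0 mulr0 subr0 in det1 *; apply: P_triangular.
move: (divz_eq a c) (ltz_mod a c_neq0) (modz_ge0 a c_neq0).
move: (a %/ c)%Z (a %% c)%Z => q r a_eq r_lt r_ge0.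
have det1' : c * (q * d - b) - d * - r = 1 by rewrite -det1 a_eq; ring.
have r_small : (`|- r| < n)%N by lia.
have S_rest : SL2Z (mk2 c d (- r) (q * d - b)) by rewrite /SL2Z mk2_det.
have SUS := SL2Z_mul (SL2Z_Um q) SL2Z_Sm.
rewrite (mk2_euclid_step b d a_eq).
exact: P_mul SUS S_rest (P_mul (SL2Z_Um q) SL2Z_Sm (P_Um q) P_Sm) (IH _ _ _ _ r_small det1').
Qed.

Lemma SL2Z_generated t : SL2Z t -> P t.
Proof.
rewrite /SL2Z [t]mk2_eta mk2_det; exact: P_mk2 (ltnSn _).
Qed.

End Generation.

Section Image.
Variables (F : fieldType) (charF0 : [pchar F] =i pred0).

Definition hat_image (f : 'M[F]_2 -> 'M[F]_2) : Prop :=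
  exists t, SL2Z t /\ agree_sl2 f (hat t).

Lemma hat_image_subgroup : subgroup_closed hat_image.
Proof.
split.
- by exists 1%:M; split=> [|u _]; rewrite ?hat1 // /SL2Z det1.
- move=> g h [t [St Hg]] [s [Ss Hh]]; exists (t *m s); split; first exact: SL2Z_mul.
  by move=> u Hu /=; rewrite Hh // Hg ?hat_sl2 // hat_mul.
- move=> g h [t [St Hg]] gK hK; have [Si _ _] := SL2Z_inv St.
  exists (invmx t); split=> // u Hu.
  have hat_inv_u : hat (invmx t) u \in sl2 (F:=F) by exact: hat_sl2.
  by rewrite -[in LHS](hatKV St u) -Hg // gK.
- by move=> g h [t [St Hg]] gh; exists t; split=> // u Hu; rewrite -gh // Hg.
Qed.

Lemma expad_generators :
  [/\ expad (xstar F) =1 hat Xi, expad (ystar F) =1 hat Yi & expad (zstar F) =1 hat Zi].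
Proof.
have two_neq0 : (2%:R : F) != 0 by rewrite ((pcharf0P F).1 charF0).
have [xx yy zz] := generators_sq F.
by split; apply: expad_hat; rewrite ?intmx_Xi ?intmx_Yi ?intmx_Zi.
Qed.

Lemma Ggen_hat_image f : Ggen f <-> hat_image f.
Proof.
have [eX eY eZ] := expad_generators.
split.
  move=> Gf; apply: Gf hat_image_subgroup _ _ _.
  - by exists Xi; split=> [|u _]; [exact: SL2Z_Xi | exact: eX].
  - by exists Yi; split=> [|u _]; [exact: SL2Z_Yi | exact: eY].
  by exists Zi; split=> [|u _]; [exact: SL2Z_Zi | exact: eZ].
case=> t [St Hf] H [_ H_comp H_inv H_agree] _ Hy Hz.
have H_hat : forall s, SL2Z s -> H (hat s).
  apply: (@SL2Z_generated (fun s => H (hat s))) => /=.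
  - by apply: (H_agree _ _ Hy) => u _; exact: eY.
  - by apply: (H_agree _ _ Hz) => u _; exact: eZ.
  - move=> t1 t2 S1 S2 H1 H2; apply: (H_agree _ _ (H_comp _ _ H1 H2)).
    by move=> u _ /=; rewrite hat_mul.
  - move=> s Ss Hs; apply: (H_inv _ _ Hs) => u _; [exact: hatK | exact: hatKV].
by apply: (H_agree _ _ (H_hat t St)) => u Hu; rewrite Hf.
Qed.

End Image.

Theorem theorem3p10 (F : fieldType) (charF0 : [pchar F] =i pred0) :
  [/\ (forall t, SL2Z t -> isLieAut (@hat F t)),
      (forall t1 t2, SL2Z t1 -> SL2Z t2 ->
         agree_sl2 (@hat F (t1 *m t2)) (@hat F t1 \o @hat F t2)),
      (forall t, SL2Z t -> (agree_sl2 (@hat F t) id <-> (t = 1 \/ t = -1))) &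
      (forall f : 'M[F]_2 -> 'M[F]_2,
         Ggen f <-> exists t, SL2Z t /\ agree_sl2 f (@hat F t))].
Proof.
split.
- exact: hat_LieAut.
- by move=> t1 t2 S1 S2 u _; rewrite hat_mul.
- exact: hat_kernel.
- exact: Ggen_hat_image.
Qed.
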